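(* Consider the two-player non-cooperative pricing game between two multi-homing mobile devices (MMD relays) $r_1,r_2$, in which the strategy of player $r_i$ is its charging price $p_{r_i}\in[0,+\infty)$ and, with the offered bandwidths $\omega_1,\omega_2>0$ held fixed, the utility of player $r_i$ ($i\in\{1,2\}$, $j\neq i$) is $$U_i(p_{r_i},p_{r_j}) \;=\; p_{r_i}\cdot \frac{n}{1+2^{\,p_{r_i}-p_{r_j}}\,\dfrac{\omega_j Y_j}{\omega_i Y_i}} \;-\; c_i\,\omega_i .$$ Then this game has a unique Nash equilibrium.
   Context: Here $n>0$ is the total number of ordinary mobile devices (OMDs), and the fraction expression is the number of OMDs attached to $r_i$ at the evolutionary equilibrium of the OMDs' relay-selection game. $c_i\ge 0$ is the relay cost of $r_i$ per unit bandwidth. $Y_i=\max\{\tau_i,b_i\}>0$ with $b_i=1+SNR_{s_i d_i}$, $\tau_i=1+SNR_{s_i d_i}+SNR_{s_i r_i d_i}$, $SNR_{s_i d_i}=P|h_{s_id_i}|^2/\sigma^2$, $SNR_{s_ir_id_i}=\frac{P^2|h_{s_ir_i}|^2|h_{r_id_i}|^2}{\sigma^2(\sigma^2+P|h_{s_ir_i}|^2+P|h_{r_id_i}|^2)}$ (transmit power $P>0$, noise variance $\sigma^2>0$, channel gains $h$ between source $s_i$, relay $r_i$, destination $d_i$). A Nash equilibrium is a pair $(p_{r_1}^*,p_{r_2}^* )$ such that for each $i$, $U_i(p_{r_i}^*,p_{r_j}^* )\ge U_i(p_{r_i},p_{r_j}^* )$ for all $p_{r_i}\ge 0$. *)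

From Stdlib Require Import Reals.
From Coquelicot Require Import Coquelicot.
Open Scope R_scope.

Definition SNR_sd (P sigma2 : R) (h_sd : C) : R :=
  P * (Cmod h_sd) ^ 2 / sigma2.

Definition SNR_srd (P sigma2 : R) (h_sr h_rd : C) : R :=
  (P ^ 2 * (Cmod h_sr) ^ 2 * (Cmod h_rd) ^ 2)
  / (sigma2 * (sigma2 + P * (Cmod h_sr) ^ 2 + P * (Cmod h_rd) ^ 2)).

Definition b_i (P sigma2 : R) (h_sd : C) : R := 1 + SNR_sd P sigma2 h_sd.

Definition tau_i (P sigma2 : R) (h_sd h_sr h_rd : C) : R :=
  1 + SNR_sd P sigma2 h_sd + SNR_srd P sigma2 h_sr h_rd.

Definition Y_i (P sigma2 : R) (h_sd h_sr h_rd : C) : R :=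
  Rmax (tau_i P sigma2 h_sd h_sr h_rd) (b_i P sigma2 h_sd).

Definition utility (n c_i w_i Y_i w_j Y_j p_i p_j : R) : R :=
  p_i * (n / (1 + Rpower 2 (p_i - p_j) * ((w_j * Y_j) / (w_i * Y_i)))) - c_i * w_i.

Definition is_NE (U1 U2 : R -> R -> R) (p : R * R) : Prop :=
  0 <= fst p /\ 0 <= snd p /\
  (forall q, 0 <= q -> U1 q (snd p) <= U1 (fst p) (snd p)) /\
  (forall q, 0 <= q -> U2 q (fst p) <= U2 (snd p) (fst p)).

(** Writing [G] for the ratio [2^(p_i - p_j) w_j Y_j / (w_i Y_i)], the revenue
    [p_i / (1 + G)] of relay [r_i] has a unique maximiser over prices, the unique
    root of the first-order condition [1 + G = ln 2 * p_i * G]: since [G] is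
    exponential in [p_i], convexity of [exp] shows that the critical value
    dominates every other price.  So an equilibrium is exactly a pair of prices
    satisfying both first-order conditions.  The two ratios are reciprocal,
    [G_1 = x] and [G_2 = 1/x], so these conditions read [ln 2 * p_2 = 1 + x] and
    [ln 2 * p_1 = 1 + 1/x], and then [x] must solve
    [ln x + x - 1/x = ln (w_2 Y_2 / (w_1 Y_1))].  The left-hand side is a
    strictly increasing bijection of [(0, +oo)] onto the reals, so there is
    exactly one equilibrium. *)

From Stdlib Require Import Reals.
From Coquelicot Require Import Coquelicot.
From Stdlib Require Import Lra Psatz.
Open Scope R_scope.

(* With [l = ln 2] and [a = w_j Y_j / (w_i Y_i)], [load_ratio l a p_j p_i] is
   [2^(p_i - p_j) w_j Y_j / (w_i Y_i)], and [U_i = n * revenue l a p_j p_i - c_i w_i]. *)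
Definition load_ratio (l a p q : R) : R := a * exp ((q - p) * l).

Definition revenue (l a p q : R) : R := q / (1 + load_ratio l a p q).

Definition critical (l a p q : R) : Prop :=
  1 + load_ratio l a p q = l * q * load_ratio l a p q.

Lemma load_ratio_pos l a p q : 0 < a -> 0 < load_ratio l a p q.
Proof. intros ha; unfold load_ratio; apply Rmult_lt_0_compat; [lra | apply exp_pos]. Qed.

Lemma critical_pos l a p q : 0 < a -> critical l a p q -> 0 < l * q.
Proof.
  unfold critical; intros ha hc.
  pose proof (load_ratio_pos l a p q ha); nra.
Qed.

Lemma revenue_critical l a p q : 0 < a -> critical l a p q ->
  revenue l a p q = / (l * load_ratio l a p q).
Proof.
  intros ha hc; pose proof (critical_pos l a p q ha hc).
  pose proof (load_ratio_pos l a p q ha).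
  assert (l <> 0 /\ q <> 0) as [] by (split; intros ->; lra).
  unfold revenue; rewrite hc; field; repeat split; lra.
Qed.

Lemma revenue_lt_critical l a p qs q : 0 < l -> 0 < a ->
  critical l a p qs -> q <> qs -> revenue l a p q < revenue l a p qs.
Proof.
  intros hl ha hc hne.
  rewrite (revenue_critical l a p qs ha hc).
  set (Gs := load_ratio l a p qs) in *; set (Gq := load_ratio l a p q).
  assert (hGs : 0 < Gs) by apply load_ratio_pos, ha.
  assert (hGq : 0 < Gq) by apply load_ratio_pos, ha.
  assert (shift : Gq = Gs * exp ((q - qs) * l)).
  { unfold Gq, Gs, load_ratio.
    replace ((q - p) * l) with ((qs - p) * l + (q - qs) * l) by ring.
    rewrite exp_plus; ring. }
  assert (convex : 1 + (q - qs) * l < exp ((q - qs) * l)).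
  { apply exp_ineq1; intros h; apply Rmult_integral in h; destruct h; lra. }
  (* [Gq] lies above its tangent line at [qs]; the first-order condition does the rest *)
  assert (key : l * q * Gs < 1 + Gq).
  { unfold critical in hc; fold Gs in hc; rewrite shift; nra. }
  unfold revenue; fold Gq.
  apply (Rmult_lt_reg_r ((1 + Gq) * (l * Gs))).
  { apply Rmult_lt_0_compat; [| apply Rmult_lt_0_compat]; lra. }
  replace (q / (1 + Gq) * ((1 + Gq) * (l * Gs))) with (l * q * Gs)
    by (field; repeat split; lra).
  replace (/ (l * Gs) * ((1 + Gq) * (l * Gs))) with (1 + Gq)
    by (field; repeat split; lra).
  exact key.
Qed.

Lemma critical_exists l a p : 0 < l -> 0 < a ->
  exists q, 0 <= q /\ critical l a p q.
Proof.
  intros hl ha.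
  (* at [q1] the load ratio is at least [a] and [l * q1 - 1 > 1 / a] *)
  set (q1 := Rmax p 0 + (2 + / a) / l).
  assert (hp : p <= Rmax p 0) by apply Rmax_l.
  assert (hp0 : 0 <= Rmax p 0) by apply Rmax_r.
  assert (hia : 0 < / a) by (apply Rinv_0_lt_compat; lra).
  assert (hlq1 : l * q1 = l * Rmax p 0 + (2 + / a)) by (unfold q1; field; lra).
  assert (hq1 : 0 < q1).
  { unfold q1; pose proof (Rdiv_lt_0_compat (2 + / a) l); lra. }
  assert (hG1 : a <= load_ratio l a p q1).
  { unfold load_ratio.
    assert (0 <= (q1 - p) * l) by nra.
    pose proof (exp_ineq1_le ((q1 - p) * l)); nra. }
  assert (haa : a * / a = 1) by (field; lra).
  destruct (IVT (fun q => l * q * load_ratio l a p q - (1 + load_ratio l a p q)) 0 q1)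
    as [q [hq hroot]].
  - unfold load_ratio; apply derivable_continuous; reg.
  - exact hq1.
  - pose proof (load_ratio_pos l a p 0 ha); lra.
  - assert (0 <= (load_ratio l a p q1 - a) * (l * q1 - 1)) by (apply Rmult_le_pos; nra).
    assert (0 <= a * (l * Rmax p 0)) by (apply Rmult_le_pos; nra).
    clearbody q1; nra.
  - exists q; split; [lra |]; unfold critical; lra.
Qed.

Lemma best_response_iff_critical l a p q0 : 0 < l -> 0 < a ->
  (forall q, 0 <= q -> revenue l a p q <= revenue l a p q0) <-> critical l a p q0.
Proof.
  intros hl ha; split.
  - intros hmax.
    destruct (critical_exists l a p hl ha) as [qs [hqs hc]].
    destruct (Req_dec q0 qs) as [-> | hne]; [exact hc |].
    pose proof (revenue_lt_critical l a p qs q0 hl ha hc hne).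
    pose proof (hmax qs hqs); lra.
  - intros hc q _.
    destruct (Req_dec q q0) as [-> | hne]; [lra |].
    left; exact (revenue_lt_critical l a p q0 q hl ha hc hne).
Qed.

Lemma utility_revenue n c w Y w' Y' q p :
  utility n c w Y w' Y' q p = n * revenue (ln 2) (w' * Y' / (w * Y)) p q - c * w.
Proof.
  unfold utility, revenue, load_ratio, Rpower, Rdiv.
  rewrite (Rmult_comm (exp _)); ring.
Qed.


Lemma utility_best_response_iff n c w Y w' Y' p q0 :
  0 < n -> 0 < w' * Y' / (w * Y) ->
  (forall q, 0 <= q -> utility n c w Y w' Y' q p <= utility n c w Y w' Y' q0 p)
  <-> critical (ln 2) (w' * Y' / (w * Y)) p q0.
Proof.
  intros hn ha.
  assert (hl : 0 < ln 2) by (pose proof ln_lt_2; lra).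
  rewrite <- (best_response_iff_critical _ _ p q0 hl ha).
  split; intros hmax q hq; specialize (hmax q hq);
    rewrite !utility_revenue in *; nra.
Qed.

Lemma load_ratio_swap l a p q : 0 < a ->
  load_ratio l (/ a) p q = / load_ratio l a q p.
Proof.
  intros ha; unfold load_ratio.
  replace ((q - p) * l) with (- ((p - q) * l)) by ring.
  rewrite exp_Ropp; field; split; [apply Rgt_not_eq, exp_pos | lra].
Qed.

Definition balance (s : R) : R := s + exp s - exp (- s).

Lemma balance_increasing s t : s < t -> balance s < balance t.
Proof.
  intros h; unfold balance.
  pose proof (exp_increasing _ _ h).
  assert (exp (- t) < exp (- s)) by (apply exp_increasing; lra).
  lra.
Qed.

Lemma balance_inj s t : balance s = balance t -> s = t.
Proof.
  intros h; destruct (Rtotal_order s t) as [hst | [hst | hst]]; [| exact hst |].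
  - pose proof (balance_increasing s t hst); lra.
  - pose proof (balance_increasing t s hst); lra.
Qed.

Lemma balance_surjective L : exists s, balance s = L.
Proof.
  assert (hL : 0 <= Rabs L) by apply Rabs_pos.
  destruct (IVT (fun s => balance s - L) (- Rabs L - 1) (Rabs L + 1))
    as [s [_ hs]].
  - unfold balance; apply derivable_continuous; reg.
  - lra.
  - unfold balance.
    assert (exp (- Rabs L - 1) < exp (- (- Rabs L - 1))) by (apply exp_increasing; lra).
    pose proof (Rle_abs (- L)); rewrite Rabs_Ropp in *; lra.
  - unfold balance.
    assert (exp (- (Rabs L + 1)) < exp (Rabs L + 1)) by (apply exp_increasing; lra).
    pose proof (Rle_abs L); lra.
  - exists s; lra.
Qed.

(* Parametrised by [s = ln x], where [x] is the load ratio of [r_1] at equilibrium. *)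
Definition equilibrium_prices (l s : R) : R * R :=
  ((1 + exp s) / (l * exp s), (1 + exp s) / l).

Lemma critical_pair_equilibrium_prices l a p1 p2 : 0 < l -> 0 < a ->
  critical l a p2 p1 -> critical l (/ a) p1 p2 ->
  exists s, balance s = ln a /\ (p1, p2) = equilibrium_prices l s.
Proof.
  unfold critical; intros hl ha h1 h2.
  rewrite load_ratio_swap in h2 by exact ha.
  set (x := load_ratio l a p2 p1) in *.
  assert (hx : 0 < x) by apply load_ratio_pos, ha.
  assert (hp2 : l * p2 = 1 + x).
  { apply Rmult_eq_reg_r with (/ x); [| apply Rinv_neq_0_compat; lra].
    rewrite <- h2; field; lra. }
  assert (hgap : (p1 - p2) * l = / x - x).
  { apply Rmult_eq_reg_r with x; [| lra].
    field_simplify; [nra | lra]. }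
  exists (ln x); unfold balance, equilibrium_prices; split.
  - rewrite exp_Ropp, exp_ln by exact hx.
    unfold x at 1, load_ratio.
    rewrite ln_mult, ln_exp by (try apply exp_pos; lra).
    rewrite hgap; ring.
  - rewrite exp_ln by exact hx; f_equal.
    + apply Rmult_eq_reg_r with (l * x); [| nra].
      field_simplify; lra.
    + apply Rmult_eq_reg_r with l; [| lra].
      field_simplify; lra.
Qed.

Lemma equilibrium_prices_critical l a s : 0 < l -> 0 < a -> balance s = ln a ->
  let e := equilibrium_prices l s in
  critical l a (snd e) (fst e) /\ critical l (/ a) (fst e) (snd e).
Proof.
  intros hl ha hs e.
  assert (hx : 0 < exp s) by apply exp_pos.
  assert (hG : load_ratio l a (snd e) (fst e) = exp s).
  { unfold load_ratio, e, equilibrium_prices; simpl.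
    replace (((1 + exp s) / (l * exp s) - (1 + exp s) / l) * l) with (s + - ln a)
      by (rewrite <- hs; unfold balance; rewrite exp_Ropp; field; lra).
    rewrite exp_plus, exp_Ropp, exp_ln by exact ha.
    field; lra. }
  unfold critical; rewrite load_ratio_swap, hG by exact ha.
  unfold e, equilibrium_prices; simpl.
  split; field; lra.
Qed.

Lemma is_NE_utility_iff n c1 c2 w1 w2 Y1 Y2 p :
  0 < n -> 0 < w1 * Y1 -> 0 < w2 * Y2 ->
  is_NE (utility n c1 w1 Y1 w2 Y2) (utility n c2 w2 Y2 w1 Y1) p <->
  exists s, balance s = ln (w2 * Y2 / (w1 * Y1)) /\ p = equilibrium_prices (ln 2) s.
Proof.
  intros hn h1 h2.
  set (a := w2 * Y2 / (w1 * Y1)).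
  assert (ha : 0 < a) by (apply Rdiv_lt_0_compat; lra).
  assert (hinv : w1 * Y1 / (w2 * Y2) = / a) by (unfold a; rewrite Rinv_div; reflexivity).
  assert (hinv_pos : 0 < w1 * Y1 / (w2 * Y2)) by (rewrite hinv; apply Rinv_0_lt_compat, ha).
  assert (hl : 0 < ln 2) by (pose proof ln_lt_2; lra).
  destruct p as [p1 p2]; unfold is_NE; simpl.
  rewrite !utility_best_response_iff by assumption; rewrite hinv.
  split.
  - intros (_ & _ & hc1 & hc2).
    exact (critical_pair_equilibrium_prices _ _ _ _ hl ha hc1 hc2).
  - intros (s & hs & hp).
    destruct (equilibrium_prices_critical _ _ _ hl ha hs) as [hc1 hc2].
    unfold equilibrium_prices in hp, hc1, hc2; simpl in hc1, hc2.
    injection hp as -> ->.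
    assert (0 < exp s) by apply exp_pos.
    repeat split; try assumption; left; apply Rdiv_lt_0_compat; nra.
Qed.

Lemma Y_i_ge_1 P sigma2 h_sd h_sr h_rd : 0 < P -> 0 < sigma2 ->
  1 <= Y_i P sigma2 h_sd h_sr h_rd.
Proof.
  intros hP hs; unfold Y_i; eapply Rle_trans; [| apply Rmax_r].
  unfold b_i, SNR_sd.
  assert (0 <= P * Cmod h_sd ^ 2 / sigma2).
  { apply Rmult_le_pos; [apply Rmult_le_pos; [lra | apply pow2_ge_0] |].
    left; apply Rinv_0_lt_compat, hs. }
  lra.
Qed.

Theorem theorem2
  (n : R) (hn : 0 < n)
  (c1 c2 : R) (hc1 : 0 <= c1) (hc2 : 0 <= c2)
  (w1 w2 : R) (hw1 : 0 < w1) (hw2 : 0 < w2)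
  (P sigma2 : R) (hP : 0 < P) (hsigma : 0 < sigma2)
  (h_s1d1 h_s1r1 h_r1d1 h_s2d2 h_s2r2 h_r2d2 : C) :
  let Y1 := Y_i P sigma2 h_s1d1 h_s1r1 h_r1d1 in
  let Y2 := Y_i P sigma2 h_s2d2 h_s2r2 h_r2d2 in
  let U1 := utility n c1 w1 Y1 w2 Y2 in
  let U2 := utility n c2 w2 Y2 w1 Y1 in
  exists! p : R * R, is_NE U1 U2 p.
Proof.
  intros Y1 Y2 U1 U2.
  assert (hwY1 : 0 < w1 * Y1).
  { pose proof (Y_i_ge_1 P sigma2 h_s1d1 h_s1r1 h_r1d1 hP hsigma); unfold Y1; nra. }
  assert (hwY2 : 0 < w2 * Y2).
  { pose proof (Y_i_ge_1 P sigma2 h_s2d2 h_s2r2 h_r2d2 hP hsigma); unfold Y2; nra. }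
  pose proof (is_NE_utility_iff n c1 c2 w1 w2 Y1 Y2) as hNE.
  destruct (balance_surjective (ln (w2 * Y2 / (w1 * Y1)))) as [s hs].
  exists (equilibrium_prices (ln 2) s); split.
  - apply hNE; try assumption.
    exists s; split; [exact hs | reflexivity].
  - intros p hp; apply hNE in hp as (t & ht & ->); try assumption.
    f_equal; apply balance_inj; congruence.
Qed.
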